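(* Let $S_S=S_C=\{0\}$, let $d\in(0,\frac12)$, and let $G_0=(V_0,E_0)$ be a seed geometric graph such that some vertex $u\in V_0$ is isolated ($\deg(u)=0$). Then for every dynamic graph $(G_t=(V_t,E_t))_{t\geq0}$ generated by D3G3 from $G_0$ with these parameters, $n_t=|V_t|\leq\frac{8}{\pi d^2}$ for all $t>0$.
   Context: Let $\mathbb{T}=[0,1)^2$ be the unit torus with toroidal Euclidean distance $\mathrm{dist}$; a geometric graph with threshold $d$ on a finite point set $V\subset\mathbb{T}$ has edges $\{u,v\}$, $u\neq v$, with $\mathrm{dist}(u,v)\leq d$. D3G3 takes $d$, sets $S_S,S_C\subseteq\mathbb{N}$ and a non-null seed geometric graph $G_0$. From $G_t=(V_t,E_t)$, $G_{t+1}$ is obtained by applying simultaneously to each $v\in V_t$ (with $\deg(v)$ its degree in $G_t$): $v\in V_{t+1}$ (same position) iff $\deg(v)\in S_S$; if $\deg(v)\in S_C$, a new vertex (distinct from all previous ones) is added to $V_{t+1}$ at a uniformly random position in $\mathbb{T}$. No other vertices are in $V_{t+1}$; $E_{t+1}$ is given by the geometric rule. *)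

From Stdlib Require Import Reals List Permutation Arith.
Import ListNotations.
Open Scope R_scope.

Definition point := (R * R)%type.
Definition in_torus (p : point) : Prop :=
  0 <= fst p < 1 /\ 0 <= snd p < 1.

Definition tdist1 (a b : R) : R := Rmin (Rabs (a - b)) (1 - Rabs (a - b)).
Definition tdist (p q : point) : R :=
  sqrt (tdist1 (fst p) (fst q) ^ 2 + tdist1 (snd p) (snd q) ^ 2).

(* A geometric graph is represented by its finite list of vertices (each list
   entry is a distinct vertex, given by its position); edges are determined by
   the threshold d: {u,v}, u <> v, is an edge iff tdist u v <= d. *)
Definition adjb (d : R) (p q : point) : bool :=
  if Rle_dec (tdist p q) d then true else false.

Definition vtx (V : list point) (i : nat) : point := nth i V (0, 0).

Definition degree (d : R) (V : list point) (i : nat) : nat :=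
  length (filter (fun j => andb (negb (Nat.eqb i j)) (adjb d (vtx V i) (vtx V j)))
                 (seq 0 (length V))).

(* one D3G3 step with parameters d, S_S, S_C (sets of naturals as boolean
   predicates): survivors keep their position; each vertex whose degree is in
   S_C creates one new vertex at an (arbitrary realization of a uniformly
   random) position in the torus. *)
Definition D3G3_step (d : R) (SS SC : nat -> bool) (V V' : list point) : Prop :=
  exists news : list point,
    Forall in_torus news /\
    length news = length (filter (fun i => SC (degree d V i)) (seq 0 (length V))) /\
    Permutation V'
      (map (vtx V) (filter (fun i => SS (degree d V i)) (seq 0 (length V))) ++ news).

Definition seed_graph (V : list point) : Prop :=
  V <> [] /\ Forall in_torus V.

Definition D3G3_run (d : R) (SS SC : nat -> bool) (G : nat -> list point) : Prop :=
  seed_graph (G 0%nat) /\ forall t : nat, D3G3_step d SS SC (G t) (G (S t)).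

Definition S0 (n : nat) : bool := Nat.eqb n 0.

(* After one step only the isolated vertices of the previous graph survive, and each spawns
   exactly one newborn, so n_(t+1) = 2k with k points pairwise more than d apart.  The open
   disks of radius d/2 around them are disjoint in the torus, hence k PI (d/2)^2 <= 1.
   This area bound comes from counting points of the grid (Z/N)^2: each lies in at most one
   disk, while a disk of radius r contains at least PI r^2 N^2 - O(N) of them.  The latter
   follows by comparing grid counts on the circle, first along each column and then across
   columns, with Riemann sums of a nonincreasing profile (the indicator of an interval, then
   the half-chord sqrt (r^2 - x^2)) whose primitive is known in closed form. *)

From Stdlib Require Import Reals List Permutation Lra Lia ZArith.
From Coquelicot Require Import Coquelicot.
Import ListNotations.
Open Scope R_scope.

(** * Finite sums *)

Fixpoint sumN (f : nat -> R) (n : nat) : R :=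
  match n with O => 0 | S n => sumN f n + f n end.

Lemma sumN_ext f g n : (forall k, (k < n)%nat -> f k = g k) -> sumN f n = sumN g n.
Proof.
  induction n as [|n IH]; intros H; simpl; [reflexivity|].
  rewrite IH by (intros; apply H; lia). rewrite H by lia. reflexivity.
Qed.

Lemma sumN_le f g n : (forall k, (k < n)%nat -> f k <= g k) -> sumN f n <= sumN g n.
Proof.
  induction n as [|n IH]; intros H; simpl; [lra|].
  assert (f n <= g n) by (apply H; lia).
  assert (sumN f n <= sumN g n) by (apply IH; intros; apply H; lia). lra.
Qed.

Lemma sumN_const c n : sumN (fun _ => c) n = INR n * c.
Proof. induction n as [|n IH]; simpl sumN; [simpl; lra|]. rewrite IH, S_INR. lra. Qed.

Lemma sumN_ge0 f n : (forall k, (k < n)%nat -> 0 <= f k) -> 0 <= sumN f n.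
Proof.
  intros H. replace 0 with (sumN (fun _ => 0) n) by (rewrite sumN_const; lra).
  now apply sumN_le.
Qed.

Lemma sumN_plus f g n : sumN (fun k => f k + g k) n = sumN f n + sumN g n.
Proof. induction n; simpl; lra. Qed.

Lemma sumN_scal c f n : sumN (fun k => c * f k) n = c * sumN f n.
Proof. induction n as [|n IH]; simpl; [lra|]. rewrite IH. lra. Qed.

Lemma sumN_add f m n : sumN f (m + n) = sumN f m + sumN (fun k => f (m + k)%nat) n.
Proof.
  induction n as [|n IH]; simpl; [rewrite Nat.add_0_r; lra|].
  rewrite Nat.add_succ_r. simpl. rewrite IH. lra.
Qed.

Lemma sumN_succ_l f n : sumN f (S n) = f 0%nat + sumN (fun k => f (S k)) n.
Proof. change (S n) with (1 + n)%nat. rewrite sumN_add. simpl. lra. Qed.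

Lemma sumN_rev f n : sumN f n = sumN (fun k => f (n - 1 - k)%nat) n.
Proof.
  induction n as [|n IH]; [reflexivity|].
  simpl sumN at 1. rewrite IH, sumN_succ_l.
  replace (S n - 1 - 0)%nat with n by lia.
  rewrite (sumN_ext (fun k => f (S n - 1 - S k)%nat) (fun k => f (n - 1 - k)%nat))
    by (intros; f_equal; lia). lra.
Qed.

Lemma sumN_translates3 h N :
  sumN h (3 * N) = sumN (fun j => h j + h (j + N)%nat + h (j + 2 * N)%nat) N.
Proof.
  rewrite !sumN_plus. replace (3 * N)%nat with (N + N + N)%nat by lia. rewrite !sumN_add.
  rewrite (sumN_ext (fun j => h (j + N)%nat) (fun k => h (N + k)%nat)) by (intros; f_equal; lia).
  rewrite (sumN_ext (fun j => h (j + 2 * N)%nat) (fun k => h (N + N + k)%nat))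
    by (intros; f_equal; lia).
  lra.
Qed.

Fixpoint sumL (f : point -> R) (P : list point) : R :=
  match P with [] => 0 | p :: P' => f p + sumL f P' end.

Lemma sumL_le f g P : (forall p, In p P -> f p <= g p) -> sumL f P <= sumL g P.
Proof.
  induction P as [|p P IH]; intros H; simpl; [lra|].
  assert (f p <= g p) by (apply H; now left).
  assert (sumL f P <= sumL g P) by (apply IH; intros; apply H; now right). lra.
Qed.

Lemma sumL_const c P : sumL (fun _ => c) P = INR (length P) * c.
Proof.
  induction P as [|p P IH]; simpl sumL; [simpl; lra|]. rewrite IH, length_cons, S_INR. lra.
Qed.

Lemma sumL_sumN f P n : sumL (fun p => sumN (f p) n) P = sumN (fun k => sumL (fun p => f p k) P) n.
Proof.
  induction P as [|p P IH]; simpl.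
  - rewrite sumN_const. lra.
  - rewrite IH, <- sumN_plus. reflexivity.
Qed.

Lemma INR_div_range j N : (j < N)%nat -> 0 <= INR j / INR N < 1.
Proof.
  intros H. assert (0 < INR N) by (apply lt_0_INR; lia).
  assert (INR j < INR N) by (apply lt_INR; auto). pose proof (pos_INR j).
  split; [apply Rdiv_le_0_compat; lra|]. apply Rlt_div_l; lra.
Qed.

Lemma Rdiv_le_range x y r : 0 < r -> 0 <= x <= y -> 0 <= x / r <= y / r.
Proof.
  intros Hr Hxy. pose proof (Rinv_0_lt_compat r Hr).
  split; [apply Rdiv_le_0_compat | apply Rmult_le_compat_r]; lra.
Qed.

(** * Distances on the torus *)

Lemma tdist1_ge0 x a : 0 <= x < 1 -> 0 <= a < 1 -> 0 <= tdist1 x a.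
Proof.
  intros. unfold tdist1, Rmin. destruct (Rle_dec _ _); unfold Rabs in *;
  repeat destruct (Rcase_abs _); lra.
Qed.

Lemma tdist1_le_translates x a : 0 <= x < 1 -> 0 <= a < 1 ->
  tdist1 x a <= Rabs (x - 1 - a) /\ tdist1 x a <= Rabs (x - a) /\ tdist1 x a <= Rabs (x + 1 - a).
Proof.
  intros. unfold tdist1, Rmin. destruct (Rle_dec _ _); unfold Rabs in *;
  repeat destruct (Rcase_abs _); lra.
Qed.

Lemma tdist1_sym x y : tdist1 x y = tdist1 y x.
Proof. unfold tdist1. now rewrite Rabs_minus_sym. Qed.

Lemma tdist1_triangle x y z : 0 <= x < 1 -> 0 <= y < 1 -> 0 <= z < 1 ->
  tdist1 x z <= tdist1 x y + tdist1 y z.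
Proof.
  intros. unfold tdist1, Rmin. repeat destruct (Rle_dec _ _); unfold Rabs in *;
  repeat destruct (Rcase_abs _); lra.
Qed.

Lemma tdist_sym p q : tdist p q = tdist q p.
Proof. unfold tdist. now rewrite (tdist1_sym (fst p)), (tdist1_sym (snd p)). Qed.

Lemma euclid_norm_triangle a1 a2 b1 b2 :
  sqrt ((a1 + b1) ^ 2 + (a2 + b2) ^ 2) <= sqrt (a1 ^ 2 + a2 ^ 2) + sqrt (b1 ^ 2 + b2 ^ 2).
Proof.
  set (X := a1 ^ 2 + a2 ^ 2). set (Y := b1 ^ 2 + b2 ^ 2).
  assert (HX : 0 <= X) by (unfold X; nra). assert (HY : 0 <= Y) by (unfold Y; nra).
  pose proof (sqrt_pos X). pose proof (sqrt_pos Y).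
  pose proof (sqrt_sqrt X HX). pose proof (sqrt_sqrt Y HY).
  assert (cauchy_schwarz : a1 * b1 + a2 * b2 <= sqrt X * sqrt Y).
  { rewrite <- sqrt_mult by assumption.
    destruct (Rle_dec (a1 * b1 + a2 * b2) 0) as [|Hpos]; [pose proof (sqrt_pos (X * Y)); lra|].
    rewrite <- (sqrt_square (a1 * b1 + a2 * b2)) by lra.
    apply sqrt_le_1_alt. unfold X, Y. pose proof (pow2_ge_0 (a1 * b2 - a2 * b1)). nra. }
  rewrite <- (sqrt_square (sqrt X + sqrt Y)) by lra.
  apply sqrt_le_1_alt. unfold X, Y in *. nra.
Qed.

Lemma tdist_triangle p g q : in_torus p -> in_torus g -> in_torus q ->
  tdist p q <= tdist p g + tdist g q.
Proof.
  intros [] [] []. unfold tdist.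
  eapply Rle_trans; [|apply euclid_norm_triangle].
  apply sqrt_le_1_alt.
  pose proof (tdist1_triangle (fst p) (fst g) (fst q)).
  pose proof (tdist1_triangle (snd p) (snd g) (snd q)).
  pose proof (tdist1_ge0 (fst p) (fst q)). pose proof (tdist1_ge0 (snd p) (snd q)).
  simpl. nra.
Qed.

(** * Riemann sums on the circle *)

Definition profile (F : R -> R) (rho : R) : Prop :=
  (forall x y, 0 <= x <= y -> F y <= F x) /\
  (forall x, 0 <= x -> 0 <= F x) /\
  (forall x, rho <= x -> F x = 0).

(* [Phi] plays the role of [s |-> int_0^s F]. *)
Definition sub_primitive (F Phi : R -> R) (rho : R) : Prop :=
  (forall s h, 0 <= s -> 0 <= h -> Phi (s + h) - Phi s <= h * F s) /\
  (forall s, rho <= s -> Phi s = Phi rho).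

Lemma nat_ceil_exists x : 0 <= x -> exists n : nat, x < INR n <= x + 1.
Proof.
  intros Hx. destruct (archimed x) as [H1 H2].
  assert (Hup : (0 <= up x)%Z) by (apply le_IZR; lra).
  exists (Z.to_nat (up x)). rewrite INR_IZR_INZ, Z2Nat.id by assumption. lra.
Qed.

Section RiemannSums.

Variables (F Phi : R -> R) (rho : R).
Hypothesis HF : profile F rho.
Hypothesis HPhi : sub_primitive F Phi rho.

Lemma sub_primitive_riemann t n N : 0 <= t -> (0 < N)%nat ->
  Phi (t + INR n / INR N) - Phi t <= sumN (fun m => F (t + INR m / INR N)) n / INR N.
Proof.
  intros Ht HN. destruct HPhi as [Hinc _].
  assert (HNp : 0 < INR N) by (apply lt_0_INR; lia).
  induction n as [|n IH].
  - simpl. replace (t + 0 / INR N) with t by (field; lra). lra.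
  - assert (0 <= INR n / INR N) by (apply Rdiv_le_0_compat; [apply pos_INR|lra]).
    pose proof (Hinc (t + INR n / INR N) (/ INR N) ltac:(lra)
                  ltac:(left; apply Rinv_0_lt_compat; lra)) as Hstep.
    replace (t + INR n / INR N + / INR N) with (t + INR (S n) / INR N) in Hstep
      by (rewrite S_INR; field; lra).
    set (Sn := sumN (fun m => F (t + INR m / INR N)) n) in *.
    simpl sumN. fold Sn.
    replace ((Sn + F (t + INR n / INR N)) / INR N)
      with (Sn / INR N + / INR N * F (t + INR n / INR N)) by (field; lra).
    lra.
Qed.

Lemma riemann_sum_ge t N : rho <= 1 -> 0 <= t <= / INR N -> (0 < N)%nat ->
  INR N * (Phi rho - Phi 0) - F 0 <= sumN (fun m => F (t + INR m / INR N)) N.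
Proof.
  intros Hrho Ht HN. destruct HF as [_ [HF0 _]]. destruct HPhi as [Hinc Hconst].
  assert (HNp : 0 < INR N) by (apply lt_0_INR; lia).
  set (S := sumN (fun m => F (t + INR m / INR N)) N).
  assert (Hfull : Phi rho - Phi t <= S / INR N).
  { rewrite <- (Hconst (t + INR N / INR N))
      by (replace (INR N / INR N) with 1 by (field; lra); lra).
    now apply sub_primitive_riemann. }
  assert (Hhead : Phi t - Phi 0 <= F 0 / INR N).
  { pose proof (Hinc 0 t ltac:(lra) ltac:(lra)) as H. rewrite Rplus_0_l in H.
    pose proof (HF0 0 ltac:(lra)).
    assert (t * F 0 <= / INR N * F 0) by (apply Rmult_le_compat_r; lra).
    unfold Rdiv. lra. }
  replace S with (INR N * (S / INR N)) by (field; lra).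
  replace (INR N * (Phi rho - Phi 0) - F 0) with (INR N * (Phi rho - Phi 0 - F 0 / INR N))
    by (field; lra).
  apply Rmult_le_compat_l; lra.
Qed.

(* [J / N] is the first grid point right of [a]; the [N] grid points on either side of [a]
   form left Riemann sums starting at offsets in [[0, 1/N]]. *)
Lemma line_sum_ge a N : 0 <= a < 1 -> rho <= 1 -> (0 < N)%nat ->
  2 * INR N * (Phi rho - Phi 0) - 2 * F 0 <=
  sumN (fun k => F (Rabs (INR k / INR N - 1 - a))) (3 * N).
Proof.
  intros Ha Hrho HN. assert (HNp : 0 < INR N) by (apply lt_0_INR; lia).
  pose proof (Rinv_0_lt_compat _ HNp) as HNinv.
  set (h := fun k => F (Rabs (INR k / INR N - 1 - a))).
  assert (Hh : forall k, 0 <= h k) by (intros; apply HF, Rabs_pos).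
  destruct (nat_ceil_exists (INR N * a)) as [J [HJlo HJhi]]; [nra|].
  assert (HJN : (J <= N)%nat) by (cut (J < S N)%nat; [lia|]; apply INR_lt; rewrite S_INR; nra).
  set (t0 := INR J / INR N - a). set (t1 := a - (INR J - 1) / INR N).
  assert (Ht0 : 0 <= t0 <= / INR N).
  { replace t0 with ((INR J - INR N * a) * / INR N) by (unfold t0; field; lra). split; nra. }
  assert (Ht1 : 0 <= t1 <= / INR N).
  { replace t1 with ((INR N * a - INR J + 1) * / INR N) by (unfold t1; field; lra). split; nra. }
  assert (Hblocks : sumN (fun m => h (J + m)%nat) N + sumN (fun m => h (J + N + m)%nat) N
                    <= sumN h (3 * N)).
  { replace (3 * N)%nat with (J + N + N + (N - J))%nat by lia. rewrite !sumN_add.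
    pose proof (sumN_ge0 h J (fun k _ => Hh k)).
    pose proof (sumN_ge0 (fun k => h (J + N + N + k)%nat) (N - J) (fun k _ => Hh _)). lra. }
  assert (Hright : sumN (fun m => h (J + N + m)%nat) N = sumN (fun m => F (t0 + INR m / INR N)) N).
  { apply sumN_ext. intros m _. unfold h. f_equal.
    assert (0 <= INR m / INR N) by (apply Rdiv_le_0_compat; [apply pos_INR | lra]).
    rewrite <- (Rabs_pos_eq (t0 + INR m / INR N)) by lra. f_equal.
    rewrite !plus_INR. unfold t0. field. lra. }
  assert (Hleft : sumN (fun m => h (J + m)%nat) N = sumN (fun m => F (t1 + INR m / INR N)) N).
  { rewrite sumN_rev. apply sumN_ext. intros m Hm. unfold h. f_equal.
    assert (0 <= INR m / INR N) by (apply Rdiv_le_0_compat; [apply pos_INR | lra]).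
    rewrite <- (Rabs_pos_eq (t1 + INR m / INR N)) by lra.
    rewrite <- (Rabs_Ropp (t1 + INR m / INR N)). f_equal.
    rewrite plus_INR, !minus_INR by lia. unfold t1. simpl (INR 1). field. lra. }
  pose proof (riemann_sum_ge t0 N Hrho Ht0 HN).
  pose proof (riemann_sum_ge t1 N Hrho Ht1 HN).
  lra.
Qed.

Lemma translates_sum_le x a : 0 <= x < 1 -> 0 <= a < 1 -> 2 * rho <= 1 ->
  F (Rabs (x - 1 - a)) + F (Rabs (x - a)) + F (Rabs (x + 1 - a)) <= F (tdist1 x a).
Proof.
  intros Hx Ha Hrho. destruct HF as [Hmono [_ Hvan]].
  destruct (tdist1_le_translates x a Hx Ha) as [L1 [L2 L3]].
  pose proof (tdist1_ge0 x a Hx Ha) as L0.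
  pose proof (Hmono _ _ (conj L0 L1)). pose proof (Hmono _ _ (conj L0 L2)).
  pose proof (Hmono _ _ (conj L0 L3)).
  destruct (Rlt_dec (Rabs (x - 1 - a)) rho).
  - rewrite (Hvan (Rabs (x - a))), (Hvan (Rabs (x + 1 - a))); [lra | |];
      unfold Rabs in *; repeat destruct (Rcase_abs _); lra.
  - rewrite (Hvan (Rabs (x - 1 - a))) by lra.
    destruct (Rlt_dec (Rabs (x - a)) rho).
    + rewrite (Hvan (Rabs (x + 1 - a))); [lra|].
      unfold Rabs in *; repeat destruct (Rcase_abs _); lra.
    + rewrite (Hvan (Rabs (x - a))) by lra. lra.
Qed.

Lemma circle_sum_ge a N : 0 <= a < 1 -> 2 * rho <= 1 -> (0 < N)%nat ->
  2 * INR N * (Phi rho - Phi 0) - 2 * F 0 <= sumN (fun j => F (tdist1 (INR j / INR N) a)) N.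
Proof.
  intros Ha Hrho HN. assert (HNp : 0 < INR N) by (apply lt_0_INR; lia).
  eapply Rle_trans; [apply (line_sum_ge a N); auto; lra|].
  rewrite sumN_translates3. apply sumN_le. intros j Hj. cbv beta.
  set (x := INR j / INR N).
  replace (INR (j + N) / INR N) with (x + 1) by (unfold x; rewrite plus_INR; field; lra).
  replace (INR (j + 2 * N) / INR N) with (x + 2)
    by (unfold x; rewrite plus_INR, mult_INR; simpl; field; lra).
  replace (x + 1 - 1 - a) with (x - a) by ring. replace (x + 2 - 1 - a) with (x + 1 - a) by ring.
  apply translates_sum_le; auto. now apply INR_div_range.
Qed.

End RiemannSums.

(** * Lattice points in a disk *)

(* [disk_primitive x] is the area [int_0^x sqrt (1 - u^2) du] under the unit circle. *)
Definition disk_primitive (x : R) : R := / 2 * (asin x + x * sqrt (1 - x * x)).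

Lemma disk_primitive_derive c : -1 < c < 1 ->
  derivable_pt_lim disk_primitive c (sqrt (1 - c * c)).
Proof.
  intros Hc. apply is_derive_Reals.
  assert (Hpos : 0 < 1 - c * c) by nra.
  assert (Hs : 0 < sqrt (1 - c * c)) by (apply sqrt_lt_R0; lra).
  assert (Hasin : is_derive asin c (1 / sqrt (1 - c²))).
  { apply is_derive_Reals, (derive_pt_eq_1 _ _ _ (derivable_pt_asin c Hc)), derive_pt_asin. }
  assert (Hprod : is_derive (fun x => x * sqrt (1 - x * x)) c
                    (1 * sqrt (1 - c * c) + c * (- (1 * c + c * 1) * / (2 * sqrt (1 - c * c))))).
  { auto_derive; [lra | reflexivity]. }
  pose proof (is_derive_scal _ _ (/ 2) _ (is_derive_plus _ _ _ _ _ Hasin Hprod)) as H.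
  set (s := sqrt (1 - c * c)) in *.
  assert (Hss : s * s = 1 - c * c) by (apply sqrt_sqrt; lra).
  replace s with (/ 2 * plus (1 / sqrt (1 - c²)) (1 * s + c * (- (1 * c + c * 1) * / (2 * s))))
    at 1; [exact H|].
  unfold plus, Rsqr. simpl. fold s.
  transitivity (/ 2 * ((1 - c * c) / s + s)); [field; lra|].
  rewrite <- Hss. field. lra.
Qed.

Lemma disk_primitive_increment x y : 0 <= x <= y -> y < 1 ->
  disk_primitive y - disk_primitive x <= (y - x) * sqrt (1 - x * x).
Proof.
  intros Hxy Hy. destruct (Req_dec x y) as [<-|Hne]; [rewrite !Rminus_diag, Rmult_0_l; lra|].
  destruct (MVT_cor2 disk_primitive (fun c => sqrt (1 - c * c)) x y ltac:(lra)) as [c [Hmvt Hc]].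
  { intros c Hc. apply disk_primitive_derive. lra. }
  rewrite Hmvt, Rmult_comm. apply Rmult_le_compat_l; [lra|]. apply sqrt_le_1_alt. nra.
Qed.

Lemma disk_primitive_sin th : 0 <= th <= PI / 2 -> th / 2 <= disk_primitive (sin th).
Proof.
  intros Hth. unfold disk_primitive. rewrite asin_sin by lra.
  pose proof (sin_ge_0 th ltac:(lra) ltac:(lra)). pose proof (sqrt_pos (1 - sin th * sin th)).
  nra.
Qed.

Definition indicator_lt (w x : R) : R := if Rlt_dec x w then 1 else 0.

Definition chord (r rho x : R) : R :=
  if Rlt_dec x rho then r * sqrt (1 - (x / r) * (x / r)) else 0.

Definition chord_area (r rho s : R) : R := r * r * disk_primitive (Rmin s rho / r).

Lemma indicator_profile w : profile (indicator_lt w) w.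
Proof.
  unfold profile, indicator_lt. split; [|split]; intros x; [intros y Hxy|intros Hx..];
    repeat destruct (Rlt_dec _ _); lra.
Qed.

Lemma min_sub_primitive w : sub_primitive (indicator_lt w) (fun s => Rmin s w) w.
Proof.
  unfold sub_primitive, indicator_lt, Rmin. split.
  - intros s h Hs Hh. destruct (Rlt_dec s w); repeat destruct (Rle_dec _ _); lra.
  - intros s Hs. repeat destruct (Rle_dec _ _); lra.
Qed.

Lemma chord_profile r rho : 0 < r -> profile (chord r rho) rho.
Proof.
  intros Hr. unfold profile, chord.
  assert (Hpos : forall x, 0 <= r * sqrt (1 - x / r * (x / r)))
    by (intros; pose proof (sqrt_pos (1 - x / r * (x / r))); nra).
  split; [|split].
  - intros x y Hxy. destruct (Rlt_dec y rho), (Rlt_dec x rho); try lra; auto.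
    apply Rmult_le_compat_l; [lra|]. apply sqrt_le_1_alt.
    pose proof (Rdiv_le_range x y r Hr Hxy). nra.
  - intros x _. destruct (Rlt_dec x rho); auto; lra.
  - intros x Hx. destruct (Rlt_dec x rho); lra.
Qed.

Lemma chord_area_sub_primitive r rho : 0 < rho < r ->
  sub_primitive (chord r rho) (chord_area r rho) rho.
Proof.
  intros Hrho. unfold sub_primitive, chord_area, chord. split.
  - intros s h Hs Hh. destruct (Rlt_dec s rho).
    + rewrite (Rmin_left s rho) by lra. set (m := Rmin (s + h) rho).
      assert (Hm : s <= m <= rho /\ m - s <= h) by (unfold m, Rmin; destruct (Rle_dec _ _); lra).
      assert (Hsm : 0 <= s / r <= m / r) by (apply Rdiv_le_range; lra).
      assert (Hm1 : m / r < 1) by (apply Rlt_div_l; lra).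
      pose proof (disk_primitive_increment (s / r) (m / r) Hsm Hm1) as Hinc.
      pose proof (sqrt_pos (1 - s / r * (s / r))).
      replace (r * r * disk_primitive (m / r) - r * r * disk_primitive (s / r))
        with (r * r * (disk_primitive (m / r) - disk_primitive (s / r))) by ring.
      apply Rle_trans with (r * r * ((m / r - s / r) * sqrt (1 - s / r * (s / r)))); [nra|].
      replace (r * r * ((m / r - s / r) * sqrt (1 - s / r * (s / r))))
        with ((m - s) * (r * sqrt (1 - s / r * (s / r)))) by (field; lra).
      apply Rmult_le_compat_r; [nra | lra].
    + rewrite (Rmin_right s rho), (Rmin_right (s + h) rho) by lra. lra.
  - intros s Hs. now rewrite (Rmin_right s rho), (Rmin_left rho rho) by lra.
Qed.

Lemma indicator_sum_ge w b N : 0 < w -> 2 * w <= 1 -> 0 <= b < 1 -> (0 < N)%nat ->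
  2 * INR N * w - 2 <= sumN (fun l => indicator_lt w (tdist1 (INR l / INR N) b)) N.
Proof.
  intros Hw Hw2 Hb HN.
  pose proof (circle_sum_ge _ _ _ (indicator_profile w) (min_sub_primitive w) b N Hb Hw2 HN) as H.
  cbv beta in H. rewrite (Rmin_left w w), (Rmin_left 0 w) in H by lra.
  assert (indicator_lt w 0 = 1) by (unfold indicator_lt; destruct (Rlt_dec 0 w); lra).
  lra.
Qed.

Lemma column_count_ge r rho p N x : 0 < rho < r -> r <= 1 / 2 -> in_torus p -> (0 < N)%nat ->
  0 <= x < 1 ->
  2 * INR N * chord r rho (tdist1 x (fst p)) - 2 <=
  sumN (fun l => indicator_lt r (tdist (x, INR l / INR N) p)) N.
Proof.
  intros Hrho Hr [Hpx Hpy] HN Hx.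
  assert (Hind : forall l, 0 <= indicator_lt r (tdist (x, INR l / INR N) p))
    by (intros; unfold indicator_lt; destruct (Rlt_dec _ _); lra).
  set (dl := tdist1 x (fst p)).
  pose proof (tdist1_ge0 x (fst p) Hx Hpx) as Hdl0. fold dl in Hdl0.
  unfold chord. destruct (Rlt_dec dl rho) as [Hdl|];
    [|pose proof (sumN_ge0 _ N (fun l _ => Hind l)); lra].
  set (w := r * sqrt (1 - dl / r * (dl / r))).
  assert (Hw0 : 0 <= w) by (unfold w; pose proof (sqrt_pos (1 - dl / r * (dl / r))); nra).
  assert (Hww : w * w = r * r - dl * dl).
  { assert (0 <= dl / r < 1) by (split; [apply Rdiv_le_0_compat | apply Rlt_div_l]; lra).
    replace (w * w) with (r * r * (sqrt (1 - dl / r * (dl / r)) * sqrt (1 - dl / r * (dl / r))))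
      by (unfold w; ring).
    rewrite sqrt_sqrt by nra. field. lra. }
  assert (Hw : 0 < w <= r) by nra.
  eapply Rle_trans; [apply (indicator_sum_ge w (snd p) N); auto; lra|].
  apply sumN_le. intros l Hl. unfold indicator_lt.
  destruct (Rlt_dec (tdist1 (INR l / INR N) (snd p)) w) as [Hin|];
    [|destruct (Rlt_dec _ _); lra].
  destruct (Rlt_dec (tdist (x, INR l / INR N) p) r) as [|Hout]; [lra|exfalso; apply Hout].
  unfold tdist. simpl. fold dl.
  pose proof (tdist1_ge0 (INR l / INR N) (snd p) (INR_div_range l N Hl) Hpy).
  rewrite <- (sqrt_square r) by lra. apply sqrt_lt_1_alt. nra.
Qed.

Definition grid_point (N j l : nat) : point := (INR j / INR N, INR l / INR N).

Definition disk_count (r : R) (p : point) (N : nat) : R :=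
  sumN (fun j => sumN (fun l => indicator_lt r (tdist (grid_point N j l) p)) N) N.

Lemma chord_area_sin r th : 0 < r -> 0 <= th <= PI / 2 ->
  r * r * th / 2 <= chord_area r (r * sin th) (r * sin th) - chord_area r (r * sin th) 0.
Proof.
  intros Hr Hth. unfold chord_area.
  pose proof (sin_ge_0 th ltac:(lra) ltac:(lra)).
  rewrite (Rmin_left (r * sin th)), (Rmin_left 0) by nra.
  replace (r * sin th / r) with (sin th) by (field; lra).
  replace (0 / r) with 0 by (field; lra).
  pose proof (disk_primitive_sin th Hth).
  assert (disk_primitive 0 = 0) by (unfold disk_primitive; rewrite asin_0; ring).
  nra.
Qed.

(* The chord profile is cut off at [r sin th], [th < PI / 2], where [asin] is still
   differentiable; [th -> PI / 2] recovers the full area in [separated_card_le]. *)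
Lemma disk_count_ge r p N th : 0 < r <= 1 / 2 -> 0 < th < PI / 2 -> in_torus p -> (0 < N)%nat ->
  2 * INR N * INR N * r * r * th - 4 * INR N * r - 2 * INR N <= disk_count r p N.
Proof.
  intros Hr Hth Hp HN. assert (HNp : 0 < INR N) by (apply lt_0_INR; lia).
  set (rho := r * sin th).
  assert (Hsin : 0 < sin th < 1).
  { split; [apply sin_gt_0; lra|]. rewrite <- sin_PI2. apply sin_increasing_1; lra. }
  assert (Hrho : 0 < rho < r) by (unfold rho; nra).
  pose proof (circle_sum_ge _ _ _ (chord_profile r rho (proj1 Hr))
                (chord_area_sub_primitive r rho Hrho) (fst p) N (proj1 Hp) ltac:(lra) HN) as Hrows.
  pose proof (chord_area_sin r th (proj1 Hr) ltac:(lra)) as Harea. fold rho in Harea.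
  assert (Hchord0 : chord r rho 0 = r).
  { unfold chord. destruct (Rlt_dec 0 rho); [|lra].
    replace (1 - 0 / r * (0 / r)) with 1 by (field; lra). rewrite sqrt_1. ring. }
  rewrite Hchord0 in Hrows.
  set (C := sumN (fun j => chord r rho (tdist1 (INR j / INR N) (fst p))) N) in *.
  assert (Hcols : sumN (fun j => 2 * INR N * chord r rho (tdist1 (INR j / INR N) (fst p)) + -2) N
                  <= disk_count r p N).
  { apply sumN_le. intros j Hj. apply column_count_ge; auto; [lra | now apply INR_div_range]. }
  rewrite sumN_plus, sumN_scal, sumN_const in Hcols. fold C in Hcols.
  assert (HC : INR N * r * r * th - 2 * r <= C) by nra.
  assert (2 * INR N * (INR N * r * r * th - 2 * r) <= 2 * INR N * C)
    by (apply Rmult_le_compat_l; lra).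
  lra.
Qed.

(** * Packing disjoint disks *)

Definition separated (d : R) (P : list point) : Prop :=
  ForallOrdPairs (fun p q => d < tdist p q) P.

Lemma disk_indicators_sum_le1 r P g : List.Forall in_torus P -> in_torus g -> separated (2 * r) P ->
  sumL (fun p => indicator_lt r (tdist g p)) P <= 1.
Proof.
  induction P as [|p P IH]; simpl; intros HT Hg Hsep; [lra|].
  inversion HT as [|? ? Hp HP]; subst. inversion Hsep as [|? ? Hfar HsepP]; subst.
  unfold indicator_lt at 1. destruct (Rlt_dec (tdist g p) r) as [Hgp|].
  - assert (Htail : sumL (fun q => indicator_lt r (tdist g q)) P <= sumL (fun _ => 0) P).
    { apply sumL_le. intros q Hq. rewrite List.Forall_forall in HP, Hfar.
      pose proof (tdist_triangle p g q Hp Hg (HP q Hq)). pose proof (Hfar q Hq).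
      rewrite (tdist_sym p g) in *. unfold indicator_lt. destruct (Rlt_dec _ _); lra. }
    rewrite sumL_const in Htail. lra.
  - specialize (IH HP Hg HsepP). lra.
Qed.

Lemma grid_packing r P N th : 0 < r <= 1 / 2 -> 0 < th < PI / 2 -> List.Forall in_torus P ->
  separated (2 * r) P -> (0 < N)%nat ->
  INR (length P) * (2 * INR N * INR N * r * r * th - 4 * INR N * r - 2 * INR N) <= INR N * INR N.
Proof.
  intros Hr Hth HT Hsep HN. rewrite <- sumL_const. rewrite List.Forall_forall in HT.
  apply Rle_trans with (sumL (fun p => disk_count r p N) P).
  { apply sumL_le. intros p Hp. apply disk_count_ge; auto. }
  unfold disk_count. rewrite sumL_sumN.
  apply Rle_trans with (sumN (fun _ => INR N) N); [|rewrite sumN_const; lra].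
  apply sumN_le. intros j Hj. rewrite sumL_sumN.
  apply Rle_trans with (sumN (fun _ => 1) N); [|rewrite sumN_const; lra].
  apply sumN_le. intros l Hl. apply disk_indicators_sum_le1; auto.
  - now rewrite List.Forall_forall.
  - split; now apply INR_div_range.
Qed.

Lemma le_of_le_plus_div a b c : 0 <= c ->
  (forall N : nat, (0 < N)%nat -> a <= b + c / INR N) -> a <= b.
Proof.
  intros Hc H. apply Rle_plus_epsilon. intros eps Heps.
  destruct (archimed_cor1 (eps / (c + 1))) as [N [HNeps HN]]; [apply Rdiv_lt_0_compat; lra|].
  assert (0 < / INR N) by (apply Rinv_0_lt_compat, lt_0_INR; lia).
  assert (c / INR N < eps).
  { unfold Rdiv. replace eps with ((c + 1) * (eps / (c + 1))) by (field; lra). nra. }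
  specialize (H N HN). lra.
Qed.

Lemma mul_le_1_of_lt c b : 0 < b -> (forall x, 0 < x < b -> c * x <= 1) -> c * b <= 1.
Proof.
  intros Hb H. destruct (Rle_dec (c * b) 1) as [|Hcb]; [assumption|exfalso].
  assert (Hc : 0 < c) by nra.
  assert (H1 : / c < b) by (apply (Rmult_lt_reg_l c); [lra|]; rewrite Rinv_r; lra).
  assert (0 < / c) by (apply Rinv_0_lt_compat; lra).
  specialize (H ((/ c + b) / 2) ltac:(lra)).
  replace (c * ((/ c + b) / 2)) with ((1 + c * b) / 2) in H by (field; lra). lra.
Qed.

Lemma separated_card_le r P : 0 < r <= 1 / 2 -> List.Forall in_torus P -> separated (2 * r) P ->
  INR (length P) * (PI * r * r) <= 1.
Proof.
  intros Hr HT Hsep. pose proof PI_RGT_0. pose proof (pos_INR (length P)).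
  set (k := INR (length P)) in *.
  replace (k * (PI * r * r)) with (2 * k * r * r * (PI / 2)) by field.
  apply mul_le_1_of_lt; [lra|]. intros th Hth.
  apply (le_of_le_plus_div _ 1 (k * (4 * r + 2))); [nra|]. intros N HN.
  assert (HNp : 0 < INR N) by (apply lt_0_INR; lia).
  pose proof (grid_packing r P N th Hr Hth HT Hsep HN) as Hgrid. fold k in Hgrid.
  apply (Rmult_le_reg_l (INR N * INR N)); [nra|].
  replace (INR N * INR N * (1 + k * (4 * r + 2) / INR N))
    with (INR N * INR N + INR N * (k * (4 * r + 2))) by (field; lra).
  lra.
Qed.

(** * One D3G3 step with S_S = S_C = {0} *)

Definition isolated (d : R) (V : list point) : list point :=
  map (vtx V) (filter (fun i => S0 (degree d V i)) (seq 0 (length V))).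

Lemma degree_0_far d V i j : degree d V i = 0%nat -> (j < length V)%nat -> i <> j ->
  d < tdist (vtx V i) (vtx V j).
Proof.
  intros Hdeg Hj Hij. unfold degree in Hdeg. apply length_zero_iff_nil in Hdeg.
  destruct (Rlt_le_dec d (tdist (vtx V i) (vtx V j))) as [|Hle]; [assumption|exfalso].
  assert (Hin : In j (filter (fun k => (negb (Nat.eqb i k) && adjb d (vtx V i) (vtx V k))%bool)
                             (seq 0 (length V)))).
  { apply filter_In. split; [apply in_seq; lia|].
    apply Nat.eqb_neq in Hij. rewrite Hij. unfold adjb. now destruct (Rle_dec _ _). }
  now rewrite Hdeg in Hin.
Qed.

Lemma separated_vtx d V L : NoDup L ->
  (forall i, In i L -> (i < length V)%nat /\ degree d V i = 0%nat) ->
  separated d (map (vtx V) L).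
Proof.
  induction L as [|i L IH]; simpl; intros Hnodup Hiso; constructor.
  - inversion Hnodup; subst. apply List.Forall_forall. intros q Hq.
    apply in_map_iff in Hq. destruct Hq as [j [<- Hj]].
    apply degree_0_far; [apply Hiso; auto | apply Hiso; auto | intros <-; contradiction].
  - inversion Hnodup; subst. apply IH; auto.
Qed.

Lemma isolated_index_spec d V i : In i (filter (fun i => S0 (degree d V i)) (seq 0 (length V))) ->
  (i < length V)%nat /\ degree d V i = 0%nat.
Proof.
  rewrite filter_In, in_seq. unfold S0. rewrite Nat.eqb_eq. lia.
Qed.

Lemma isolated_separated d V : separated d (isolated d V).
Proof. apply separated_vtx; [apply NoDup_filter, seq_NoDup | apply isolated_index_spec]. Qed.

Lemma isolated_in_torus d V : List.Forall in_torus V -> List.Forall in_torus (isolated d V).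
Proof.
  rewrite !List.Forall_forall. intros HV q Hq.
  apply in_map_iff in Hq. destruct Hq as [i [<- Hi]].
  apply HV, nth_In, (isolated_index_spec d V i Hi).
Qed.

Lemma step_in_torus d SS SC V V' : List.Forall in_torus V -> D3G3_step d SS SC V V' ->
  List.Forall in_torus V'.
Proof.
  intros HV [news [Hnews [_ Hperm]]].
  apply (Permutation_Forall (Permutation_sym Hperm)), List.Forall_app. split; [|assumption].
  rewrite List.Forall_forall in *. intros q Hq.
  apply in_map_iff in Hq. destruct Hq as [i [<- Hi]].
  apply filter_In in Hi. destruct Hi as [Hi _]. apply in_seq in Hi.
  apply HV, nth_In. lia.
Qed.

Lemma run_in_torus d SS SC G : D3G3_run d SS SC G -> forall t, List.Forall in_torus (G t).
Proof.
  intros [[_ H0] Hstep] t. induction t; [assumption|]. eapply step_in_torus; eauto.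
Qed.

(* With [S_S = S_C], every survivor is matched by exactly one newborn vertex. *)
Lemma step_length d V V' : D3G3_step d S0 S0 V V' -> length V' = (2 * length (isolated d V))%nat.
Proof.
  intros [news [_ [Hlen Hperm]]]. apply Permutation_length in Hperm.
  unfold isolated. rewrite Hperm, length_app, length_map, Hlen. lia.
Qed.

Theorem theorem5 :
  forall (d : R), 0 < d < 1 / 2 ->
  forall G : nat -> list point,
    D3G3_run d S0 S0 G ->
    (exists u : nat, (u < length (G 0%nat))%nat /\ degree d (G 0%nat) u = 0%nat) ->
    forall t : nat, (0 < t)%nat -> INR (length (G t)) <= 8 / (PI * d ^ 2).
Proof.
  (* The isolated seed vertex only keeps [G 1] nonempty; the bound does not need it. *)
  intros d Hd G Hrun _ [|t] Ht; [lia|].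
  rewrite (step_length d (G t) (G (S t)) (proj2 Hrun t)), mult_INR.
  set (P := isolated d (G t)).
  assert (Hsep : separated (2 * (d / 2)) P)
    by (replace (2 * (d / 2)) with d by field; apply isolated_separated).
  pose proof (isolated_in_torus d _ (run_in_torus d _ _ G Hrun t)) as HP.
  pose proof (separated_card_le (d / 2) P ltac:(lra) HP Hsep) as Hpack.
  pose proof PI_RGT_0.
  apply (Rle_div_r _ _ (PI * d ^ 2)); [apply Rmult_lt_0_compat; [lra | apply pow_lt; lra]|].
  simpl INR. lra.
Qed.
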